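(* Let $\epsilon>0$ and suppose $g\in\mathrm{SO}^0(2,1)$ is $\epsilon$-hyperbolic. Then for all $\delta>0$, $$B\!\left(0,\frac{\delta\epsilon}{4}\right)\cap E^{wu}(g)\subset g\,B(0,\delta).$$
   Context: $\mathbb{R}^{2,1}$ is $\mathbb{R}^3$ with $\mathbb{B}(u,v)=u_1v_1+u_2v_2-u_3v_3$; $\mathrm{SO}^0(2,1)$ is the identity component of its linear isometry group. $\rho$ is Euclidean distance and $B(x,\delta)$ the open Euclidean ball. Let $S^1=\{(\cos\phi,\sin\phi,1)\}$. An element $g\in\mathrm{SO}^0(2,1)$ is hyperbolic if it has real distinct eigenvalues; these are $\lambda<1<\lambda^{-1}$. Let $x^-(g)$ (resp. $x^+(g)$) be the eigenvector for $\lambda$ (resp. $\lambda^{-1}$) lying on $S^1$, and $x^0(g)$ the eigenvector for eigenvalue $1$ with $\mathbb{B}(x^0(g),x^0(g))=1$ such that $(x^-(g),x^+(g),x^0(g))$ is a positively oriented basis. For a unit-spacelike $v$, $x^\pm(v)$ are the two points of $S^1\cap v^\perp$ labelled so that $(x^-(v),x^+(v),v)$ is positively oriented (so $x^\pm(x^0(g))=x^\pm(g)$). $v$ is $\epsilon$-spacelike if $\rho(x^+(v),x^-(v))\ge\epsilon$; hyperbolic $g$ is $\epsilon$-hyperbolic if $x^0(g)$ is $\epsilon$-spacelike. $E^{wu}(g)$ is the linear plane spanned by $x^0(g)$ and $x^+(g)$. *)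

From HB Require Import structures.
From mathcomp Require Import all_boot all_order all_algebra.
From mathcomp Require Import all_classical all_reals all_analysis.
Set Implicit Arguments. Unset Strict Implicit. Unset Printing Implicit Defensive.
Import Order.TTheory GRing.Theory Num.Theory.
Import numFieldNormedType.Exports.
Local Open Scope classical_set_scope.
Local Open Scope ring_scope.

Section Defs.
Variable R : realType.

Definition vec3 (a b c : R) : 'cV[R]_3 :=
  \col_(i < 3) [:: a; b; c]`_i.

Definition c1 (u : 'cV[R]_3) : R := u ord0 ord0.
Definition c2 (u : 'cV[R]_3) : R := u (inord 1) ord0.
Definition c3 (u : 'cV[R]_3) : R := u (inord 2) ord0.

Definition Bf (u v : 'cV[R]_3) : R := c1 u * c1 v + c2 u * c2 v - c3 u * c3 v.

Definition O21 : set 'M[R]_3 :=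
  [set g | forall u v : 'cV[R]_3, Bf (g *m u) (g *m v) = Bf u v].

Definition SO0_21 : set 'M[R]_3 := connected_component O21 1%:M.

Definition rho (x y : 'cV[R]_3) : R :=
  Num.sqrt (\sum_(i < 3) (x i ord0 - y i ord0) ^+ 2).

Definition Ball (x : 'cV[R]_3) (d : R) : set 'cV[R]_3 := [set y | rho x y < d].

Definition S1 : set 'cV[R]_3 := [set v | exists phi : R, v = vec3 (cos phi) (sin phi) 1].

Definition pos_oriented (a b c : 'cV[R]_3) : Prop := 0 < \det (row_mx a (row_mx b c)).

Definition hyperbolic (g : 'M[R]_3) : Prop :=
  exists a b c : R, [/\ a != b, b != c & a != c] /\
    [/\ eigenvalue g a, eigenvalue g b & eigenvalue g c].

Definition hyp_data (g : 'M[R]_3) (lam : R) (xm xp x0 : 'cV[R]_3) : Prop :=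
  [/\ lam < 1 < lam^-1,
      xm \in S1 /\ g *m xm = lam *: xm,
      xp \in S1 /\ g *m xp = lam^-1 *: xp,
      g *m x0 = x0 /\ Bf x0 x0 = 1
    & pos_oriented xm xp x0].

Definition xpm_of (v xm xp : 'cV[R]_3) : Prop :=
  [/\ xm \in S1, xp \in S1, Bf xm v = 0, Bf xp v = 0 & pos_oriented xm xp v].

Definition eps_spacelike (eps : R) (v : 'cV[R]_3) : Prop :=
  Bf v v = 1 /\ forall xm xp, xpm_of v xm xp -> eps <= rho xp xm.

(* E^{wu}(g) = linear span of x^0(g) and x^+(g) *)
Definition span2 (a b : 'cV[R]_3) : set 'cV[R]_3 :=
  [set w | exists s t : R, w = s *: a + t *: b].

End Defs.

(* On E^{wu}(g) = span(x^0, x^+), where x^+ is null and B-orthogonal to x^0,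
   the Lorentzian square of u = s x^0 + t x^+ is s^2, so s^2 <= |u|^2. The
   preimage g^-1 u = s x^0 + lambda t x^+ (0 < lambda < 1) lies on the segment
   from s x^0 to u, and convexity of the Euclidean square gives
   |g^-1 u|^2 <= |x^0|^2 |u|^2. Finally x^+ and x^- are the points where the
   plane (x^0)^perp cuts S^1; for x^0 = (a, b, c) this chord has squared length
   at most 4 / (a^2 + b^2), whence |x^0|^2 eps^2 <= 8. *)
From HB Require Import structures.
From mathcomp Require Import all_boot all_order all_algebra.
From mathcomp Require Import all_classical all_reals all_analysis.
From mathcomp Require Import ring lra.
Set Implicit Arguments. Unset Strict Implicit. Unset Printing Implicit Defensive.
Import Order.TTheory GRing.Theory Num.Theory.
Local Open Scope ring_scope.
Local Open Scope classical_set_scope.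

Lemma chord_sqr_le (R : realFieldType) (a b c p1 p2 q1 q2 : R) :
  p1 ^+ 2 + p2 ^+ 2 = 1 -> q1 ^+ 2 + q2 ^+ 2 = 1 ->
  a * p1 + b * p2 = c -> a * q1 + b * q2 = c ->
  (a ^+ 2 + b ^+ 2) * ((p1 - q1) ^+ 2 + (p2 - q2) ^+ 2)
    <= 4 * (a ^+ 2 + b ^+ 2 - c ^+ 2).
Proof.
move=> p_unit q_unit p_on q_on.
(* [u] and [w] are the cross products of (a, b) with p and q. *)
set u := a * p2 - b * p1; set w := a * q2 - b * q1.
have u_sqr : u ^+ 2 = a ^+ 2 + b ^+ 2 - c ^+ 2.
  have -> : u ^+ 2 = (a ^+ 2 + b ^+ 2) * (p1 ^+ 2 + p2 ^+ 2) - (a * p1 + b * p2) ^+ 2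
    by rewrite /u; ring.
  by rewrite p_unit p_on mulr1.
have w_sqr : w ^+ 2 = a ^+ 2 + b ^+ 2 - c ^+ 2.
  have -> : w ^+ 2 = (a ^+ 2 + b ^+ 2) * (q1 ^+ 2 + q2 ^+ 2) - (a * q1 + b * q2) ^+ 2
    by rewrite /w; ring.
  by rewrite q_unit q_on mulr1.
have -> : (a ^+ 2 + b ^+ 2) * ((p1 - q1) ^+ 2 + (p2 - q2) ^+ 2) = (u - w) ^+ 2.
  have chord_orth : a * (p1 - q1) + b * (p2 - q2) = 0 by lra.
  have -> : (a ^+ 2 + b ^+ 2) * ((p1 - q1) ^+ 2 + (p2 - q2) ^+ 2)
      = (a * (p1 - q1) + b * (p2 - q2)) ^+ 2 + (u - w) ^+ 2 by rewrite /u /w; ring.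
  by rewrite chord_orth expr0n add0r.
have := sqr_ge0 (u + w); lra.
Qed.

Lemma mulr_lt_sqr_quarter (R : realFieldType) (n u eps delta : R) :
  0 <= n -> 0 < delta -> n * eps ^+ 2 <= 8 -> u < (delta * eps / 4) ^+ 2 ->
  n * u < delta ^+ 2.
Proof.
move=> n_ge0 delta_gt0 n_eps u_lt.
have d2_gt0 := exprn_gt0 2 delta_gt0.
have u_le : u <= delta ^+ 2 * eps ^+ 2 / 16.
  by rewrite ltW // (_ : _ * _ / 16 = (delta * eps / 4) ^+ 2) //; field.
apply: le_lt_trans (ler_wpM2l n_ge0 u_le) _.
have -> : n * (delta ^+ 2 * eps ^+ 2 / 16) = delta ^+ 2 / 16 * (n * eps ^+ 2) by ring.
apply: (@le_lt_trans _ _ (delta ^+ 2 / 16 * 8)); last by lra.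
by rewrite ler_wpM2l // divr_ge0 ?ltW.
Qed.

Section Minkowski.
Variable R : realType.
Implicit Types (x y u v : 'cV[R]_3) (k s t l d : R).

Definition sqnorm x : R := c1 x ^+ 2 + c2 x ^+ 2 + c3 x ^+ 2.

Lemma c1D x y : c1 (x + y) = c1 x + c1 y. Proof. by rewrite /c1 !mxE. Qed.
Lemma c2D x y : c2 (x + y) = c2 x + c2 y. Proof. by rewrite /c2 !mxE. Qed.
Lemma c3D x y : c3 (x + y) = c3 x + c3 y. Proof. by rewrite /c3 !mxE. Qed.
Lemma c1Z k x : c1 (k *: x) = k * c1 x. Proof. by rewrite /c1 !mxE. Qed.
Lemma c2Z k x : c2 (k *: x) = k * c2 x. Proof. by rewrite /c2 !mxE. Qed.
Lemma c3Z k x : c3 (k *: x) = k * c3 x. Proof. by rewrite /c3 !mxE. Qed.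
Lemma c1B x y : c1 (x - y) = c1 x - c1 y. Proof. by rewrite /c1 !mxE. Qed.
Lemma c2B x y : c2 (x - y) = c2 x - c2 y. Proof. by rewrite /c2 !mxE. Qed.
Lemma c3B x y : c3 (x - y) = c3 x - c3 y. Proof. by rewrite /c3 !mxE. Qed.

Lemma sqnorm_ge0 x : 0 <= sqnorm x.
Proof. by rewrite /sqnorm !addr_ge0 ?sqr_ge0. Qed.

Lemma sqnormZ k x : sqnorm (k *: x) = k ^+ 2 * sqnorm x.
Proof. by rewrite /sqnorm !(c1Z, c2Z, c3Z); ring. Qed.

Lemma rhoE x y : rho x y = Num.sqrt (sqnorm (x - y)).
Proof.
rewrite /rho /sqnorm !big_ord_recl big_ord0 addr0 addrA /c1 /c2 /c3 !mxE.
have -> : (lift ord0 ord0 : 'I_3) = inord 1 by apply/val_inj; rewrite /= inordK.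
by have -> : (lift ord0 (lift ord0 ord0) : 'I_3) = inord 2
  by apply/val_inj; rewrite /= inordK.
Qed.

Lemma Ball0E d u : 0 < d -> Ball 0 d u <-> sqnorm u < d ^+ 2.
Proof.
move=> d_gt0; rewrite /Ball /= rhoE sub0r.
have -> : sqnorm (- u) = sqnorm u by rewrite -scaleN1r sqnormZ sqrrN expr1n mul1r.
by rewrite -{1}(ger0_norm (ltW d_gt0)) -sqrtr_sqr ltr_sqrt ?exprn_gt0.
Qed.

Lemma ler_rho d x y : 0 <= d -> (d <= rho x y) = (d ^+ 2 <= sqnorm (x - y)).
Proof.
by move=> d_ge0; rewrite rhoE -{1}(ger0_norm d_ge0) -sqrtr_sqr ler_sqrt ?sqnorm_ge0.
Qed.

Lemma sqnorm_convex x y l : 0 <= l <= 1 ->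
  sqnorm (x + l *: y) <= (1 - l) * sqnorm x + l * sqnorm (x + y).
Proof.
case/andP => l_ge0 l_le1.
have -> : (1 - l) * sqnorm x + l * sqnorm (x + y)
    = sqnorm (x + l *: y) + l * (1 - l) * sqnorm y.
  by rewrite /sqnorm !(c1D, c2D, c3D, c1Z, c2Z, c3Z); ring.
by rewrite lerDl !mulr_ge0 ?sqnorm_ge0 ?subr_ge0.
Qed.

Lemma BfC x y : Bf x y = Bf y x.
Proof. by rewrite /Bf; ring. Qed.

Lemma BfDl x y v : Bf (x + y) v = Bf x v + Bf y v.
Proof. by rewrite /Bf !(c1D, c2D, c3D); ring. Qed.

Lemma BfDr x y v : Bf v (x + y) = Bf v x + Bf v y.
Proof. by rewrite BfC BfDl !(BfC v). Qed.

Lemma BfZl k x y : Bf (k *: x) y = k * Bf x y.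
Proof. by rewrite /Bf !(c1Z, c2Z, c3Z); ring. Qed.

Lemma BfZr k x y : Bf x (k *: y) = k * Bf x y.
Proof. by rewrite BfC BfZl BfC. Qed.

Lemma Bf_le_sqnorm x : Bf x x <= sqnorm x.
Proof. by rewrite /Bf /sqnorm -!expr2; have := sqr_ge0 (c3 x); lra. Qed.

Lemma Bf_null_span x y s t : Bf x x = 1 -> Bf x y = 0 -> Bf y y = 0 ->
  Bf (s *: x + t *: y) (s *: x + t *: y) = s ^+ 2.
Proof.
move=> xx xy yy.
by rewrite !(BfDl, BfDr, BfZl, BfZr) (BfC y x) xx xy yy; ring.
Qed.

Lemma sqnorm_shrink_null x y s t l : Bf x x = 1 -> Bf x y = 0 -> Bf y y = 0 ->
  0 <= l <= 1 ->
  sqnorm (s *: x + (t * l) *: y) <= sqnorm x * sqnorm (s *: x + t *: y).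
Proof.
move=> xx xy yy l01; set u := s *: x + t *: y.
have x_ge1 : 1 <= sqnorm x by rewrite -xx Bf_le_sqnorm.
have s_le : s ^+ 2 <= sqnorm u.
  by rewrite -(Bf_null_span s t xx xy yy) Bf_le_sqnorm.
rewrite mulrC -scalerA.
apply: le_trans (sqnorm_convex (s *: x) (t *: y) l01) _.
rewrite sqnormZ -/u; case/andP: l01 => l_ge0 l_le1.
have : 0 <= (1 - l) * sqnorm x * (sqnorm u - s ^+ 2).
  by rewrite !mulr_ge0 ?subr_ge0 ?sqnorm_ge0.
have : 0 <= l * sqnorm u * (sqnorm x - 1) by rewrite !mulr_ge0 ?subr_ge0 ?sqnorm_ge0.
lra.
Qed.

Lemma O21_eigen_orthogonal g x y k l : O21 g ->
  g *m x = k *: x -> g *m y = l *: y -> k * l != 1 -> Bf x y = 0.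
Proof.
move=> Og gx gy kl_neq1; apply/eqP.
have := Og x y; rewrite gx gy BfZl BfZr mulrA => /eqP.
rewrite -subr_eq0 -{2}(mul1r (Bf x y)) -mulrBl mulf_eq0 subr_eq0.
by rewrite (negbTE kl_neq1).
Qed.

Lemma S1E x : x \in @S1 R -> c1 x ^+ 2 + c2 x ^+ 2 = 1 /\ c3 x = 1.
Proof.
rewrite in_setE => -[phi ->].
by rewrite /c1 /c2 /c3 /vec3 !mxE !inordK // cos2Dsin2.
Qed.

Lemma S1_null x : x \in @S1 R -> Bf x x = 0.
Proof. by case/S1E => x_unit x3; rewrite /Bf x3 -!expr2 x_unit; ring. Qed.

Lemma spacelike_chord_le v xp xm : Bf v v = 1 -> xp \in @S1 R -> xm \in @S1 R ->
  Bf xp v = 0 -> Bf xm v = 0 -> sqnorm v * sqnorm (xp - xm) <= 8.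
Proof.
move=> vv /S1E[p_unit p3] /S1E[m_unit m3] p_on m_on.
have on_line y : Bf y v = 0 -> c3 y = 1 -> c1 v * c1 y + c2 v * c2 y = c3 v.
  by rewrite /Bf => yv y3; rewrite y3 in yv; lra.
have := chord_sqr_le p_unit m_unit (on_line _ p_on p3) (on_line _ m_on m3).
rewrite /sqnorm !(c1B, c2B, c3B) p3 m3 subrr expr0n addr0.
move: vv; rewrite /Bf -!expr2 => vv.
have := addr_ge0 (sqr_ge0 (c1 xp - c1 xm)) (sqr_ge0 (c2 xp - c2 xm)).
nra.
Qed.

End Minkowski.

Theorem mainTheorem3 (R : realType) (eps : R) (g : 'M[R]_3)
  (lam : R) (xm xp x0 : 'cV[R]_3) :
  0 < eps ->
  @SO0_21 R g ->
  hyperbolic g ->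
  hyp_data g lam xm xp x0 ->
  eps_spacelike eps x0 ->
  forall delta : R, 0 < delta ->
    Ball 0 (delta * eps / 4) `&` span2 x0 xp `<=` (fun u => g *m u) @` Ball 0 delta.
Proof.
move=> eps_gt0 /connected_component_sub Og _ [/andP[lam_lt1 lamV_gt1]
  [S1xm gxm] [S1xp gxp] [gx0 x0x0] pos] [_ eps_x0] delta delta_gt0
  u [u_ball [s [t u_def]]].
have lam_gt0 : 0 < lam by rewrite -invr_gt0 (lt_trans ltr01).
have gx0' : g *m x0 = 1 *: x0 by rewrite scale1r.
have xp_x0 : Bf xp x0 = 0.
  by apply: O21_eigen_orthogonal Og gxp gx0' _; rewrite mulr1 gt_eqF.
have xm_x0 : Bf xm x0 = 0.
  by apply: O21_eigen_orthogonal Og gxm gx0' _; rewrite mulr1 lt_eqF.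
have := eps_x0 _ _ (And5 S1xm S1xp xm_x0 xp_x0 pos).
rewrite ler_rho ?(ltW eps_gt0) // => eps_le.
have x0_eps : sqnorm x0 * eps ^+ 2 <= 8.
  apply: le_trans (spacelike_chord_le x0x0 S1xp S1xm xp_x0 xm_x0).
  by rewrite ler_wpM2l ?sqnorm_ge0.
move: u_ball; rewrite u_def Ball0E ?divr_gt0 ?mulr_gt0 // => u_small.
exists (s *: x0 + (t * lam) *: xp); last first.
  by rewrite mulmxDr -!scalemxAr gx0 gxp scalerA -mulrA mulfV ?gt_eqF ?mulr1.
have x0_xp : Bf x0 xp = 0 by rewrite BfC.
have lam01 : 0 <= lam <= 1 by rewrite !ltW.
rewrite Ball0E //.
apply: le_lt_trans (sqnorm_shrink_null s t x0x0 x0_xp (S1_null S1xp) lam01) _.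
exact: mulr_lt_sqr_quarter (sqnorm_ge0 x0) delta_gt0 x0_eps u_small.
Qed.
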